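(* Inner p-transitivity fails in general: there exist a language $L$, an $L$-algebra $\mathfrak A$ with universe $A$, and elements $a,b,c,d,e,f\in A$ such that $a:b\approx_{\mathfrak A}c:d$ and $b:e\approx_{\mathfrak A}d:f$ hold, but $a:e\approx_{\mathfrak A}c:f$ does not hold.
   Context: Let $L$ be a language of algebras: a set of function symbols, each with an arity in $\mathbb N$ (constants are 0-ary function symbols). Fix a countably infinite set $X$ of variables; $T_{L,X}$ is the set of $L$-terms over $X$, and $X(s)$ denotes the set of variables occurring in a term $s$. For an $L$-algebra $\mathfrak A$ with universe $A$, every term $s$ induces a function $s^{\mathfrak A}$, evaluated at assignments of elements of $A$ to variables. An arrow of $\mathfrak A$ is a pair $(a,b)\in A\times A$, written $a\to b$. The generalizations of an arrow $a\to b$ in $\mathfrak A$ are the pairs of arbitrary terms $s\to t$ with $s,t\in T_{L,X}$ such that there is an assignment $\sigma$ of elements of $A$ to the variables in $X(s)\cup X(t)$ with $s^{\mathfrak A}(\sigma)=a$ and $t^{\mathfrak A}(\sigma)=b$; their set is denoted $\uparrow_{\mathfrak A}(a\to b)$. For $L$-algebras $\mathfrak A,\mathfrak B$, an arrow $a\to b$ of $\mathfrak A$ and an arrow $c\to d$ of $\mathfrak B$, set $(a\to b)\uparrow_{(\mathfrak A,\mathfrak B)}(c\to d):=\uparrow_{\mathfrak A}(a\to b)\cap\uparrow_{\mathfrak B}(c\to d)$. A pair of terms $s\to t$ is trivial in $(\mathfrak A,\mathfrak B)$ if it belongs to $\uparrow_{\mathfrak A}(e)$ for every arrow $e$ of $\mathfrak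 A$ and to $\uparrow_{\mathfrak B}(e')$ for every arrow $e'$ of $\mathfrak B$. We write $a\to b\lesssim_{(\mathfrak A,\mathfrak B)}c\to d$ iff either (i) every element of $\uparrow_{\mathfrak A}(a\to b)\cup\uparrow_{\mathfrak B}(c\to d)$ is trivial in $(\mathfrak A,\mathfrak B)$, or (ii) $(a\to b)\uparrow_{(\mathfrak A,\mathfrak B)}(c\to d)$ contains an element not trivial in $(\mathfrak A,\mathfrak B)$ and, for every arrow $c'\to d'$ of $\mathfrak B$, the inclusion $(a\to b)\uparrow_{(\mathfrak A,\mathfrak B)}(c\to d)\subseteq(a\to b)\uparrow_{(\mathfrak A,\mathfrak B)}(c'\to d')$ implies equality of these two sets. Define $a\to b\approx_{(\mathfrak A,\mathfrak B)}c\to d$ iff $a\to b\lesssim_{(\mathfrak A,\mathfrak B)}c\to d$ and $c\to d\lesssim_{(\mathfrak B,\mathfrak A)}a\to b$. For $a,b\in A$ and $c,d\in B$, the similarity-based analogical proportion $a:b\approx_{(\mathfrak A,\mathfrak B)}c:d$ holds iff $a\to b\approx_{(\mathfrak A,\mathfrak B)}c\to d$ and $b\to a\approx_{(\mathfrak A,\mathfrak B)}d\to c$. We write $\approx_{\mathfrak A}$ for $\approx_{(\mathfrak A,\mathfrak A)}$. *)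

From mathcomp Require Import all_boot.
Set Implicit Arguments. Unset Strict Implicit. Unset Printing Implicit Defensive.

Record language := Language { sym : Type; arity : sym -> nat }.

Inductive term (L : language) : Type :=
| Var : nat -> term L
| App : forall f : sym L, ('I_(arity f) -> term L) -> term L.

Record algebra (L : language) := Algebra {
  carrier :> Type;
  interp : forall f : sym L, ('I_(arity f) -> carrier) -> carrier }.

Fixpoint eval (L : language) (A : algebra L) (sigma : nat -> A) (t : term L) : A :=
  match t with
  | Var x => sigma x
  | App g ts => @interp L A g (fun i => @eval L A sigma (ts i))
  end.

Definition gen (L : language) (A : algebra L) (a b : A) (s t : term L) : Prop :=
  exists sigma : nat -> A, eval sigma s = a /\ eval sigma t = b.

Definition common_gen (L : language) (A B : algebra L) (a b : A) (c d : B)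
  (s t : term L) : Prop := gen a b s t /\ gen c d s t.

Definition trivial_in (L : language) (A B : algebra L) (s t : term L) : Prop :=
  (forall a b : A, gen a b s t) /\ (forall c d : B, gen c d s t).

Definition lesssim (L : language) (A B : algebra L) (a b : A) (c d : B) : Prop :=
  (forall s t, gen a b s t \/ gen c d s t -> trivial_in A B s t)
  \/
  ((exists s t, common_gen a b c d s t /\ ~ trivial_in A B s t) /\
   forall c' d' : B,
     (forall s t, common_gen a b c d s t -> common_gen a b c' d' s t) ->
     (forall s t, common_gen a b c' d' s t -> common_gen a b c d s t)).

Definition arrow_approx (L : language) (A B : algebra L) (a b : A) (c d : B) : Prop :=
  lesssim a b c d /\ lesssim c d a b.

Definition analogy (L : language) (A B : algebra L) (a b : A) (c d : B) : Prop :=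
  arrow_approx a b c d /\ arrow_approx b a d c.

(* Over the language without function symbols every term is a variable, so an
   arrow a -> b with a <> b is generalized only by pairs of distinct variables,
   all of which are trivial; hence any two such arrows are similar, and
   0 : 1 ~ 0 : 1 and 1 : 0 ~ 1 : 2 hold in the algebra of naturals.  The loop
   0 -> 0, however, is generalized by the non-trivial x -> x, which 0 -> 2 does
   not share, so 0 : 0 ~ 0 : 2 fails. *)
From mathcomp Require Import all_boot.

Definition empty_language : language := @Language Empty_set (fun _ => 0).

Definition set_algebra (T : Type) : algebra empty_language :=
  @Algebra empty_language T (fun f _ => match f with end).

Lemma empty_term_var (t : term empty_language) : exists x, t = Var _ x.
Proof. by case: t => [x | []]; exists x. Qed.

Lemma gen_var {A : algebra empty_language} (a b : A) (x y : nat) :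
  gen a b (Var _ x) (Var _ y) <-> (x = y -> a = b).
Proof.
split=> [[sigma [/= <- <-]] -> // | ab].
exists (fun z => if z == x then a else b) => /=; rewrite eqxx; split=> //.
by case: eqP => // yx; apply: ab.
Qed.

Lemma trivial_var_neq (A B : algebra empty_language) (x y : nat) :
  x <> y -> trivial_in A B (Var _ x) (Var _ y).
Proof. by move=> xy; split=> u v; apply/gen_var. Qed.

Lemma gen_neq_var {A : algebra empty_language} {a b : A}
    {s t : term empty_language} :
  a <> b -> gen a b s t -> exists2 x, s = Var _ x & exists2 y, t = Var _ y & x <> y.
Proof.
move=> ab; have [x ->] := empty_term_var s; have [y ->] := empty_term_var t.
by move=> /gen_var xy; exists x => //; exists y => // /xy.
Qed.

Lemma lesssim_neq {A B : algebra empty_language} (a b : A) (c d : B) :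
  a <> b -> c <> d -> lesssim a b c d.
Proof.
move=> ab cd; left=> s t gen_st.
have [x -> [y -> xy]] : exists2 x, s = Var _ x & exists2 y, t = Var _ y & x <> y.
  by case: gen_st; [apply: gen_neq_var ab | apply: gen_neq_var cd].
exact: trivial_var_neq.
Qed.

Lemma not_lesssim_loop {A B : algebra empty_language} (a : A) (c d : B) :
  c <> d -> ~ lesssim a a c d.
Proof.
move=> cd [all_trivial | [[s [t [[_ gen_cd] nontrivial]]] _]].
  have loop_gen : gen a a (Var _ 0) (Var _ 0) by apply/gen_var.
  by have [_ /(_ c d) /gen_var /(_ erefl)] := all_trivial _ _ (or_introl loop_gen).
have [x Es [y Et xy]] := gen_neq_var cd gen_cd.
by apply: nontrivial; rewrite Es Et; apply: trivial_var_neq.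
Qed.

Lemma analogy_neq {A B : algebra empty_language} (a b : A) (c d : B) :
  a <> b -> c <> d -> analogy a b c d.
Proof.
move=> ab cd; split; split; apply: lesssim_neq => //; by move=> /esym.
Qed.

Theorem theorem3 :
  exists (L : language) (A : algebra L) (a b c d e f : A),
    analogy a b c d /\ analogy b e d f /\ ~ analogy a e c f.
Proof.
exists empty_language, (set_algebra nat), 0, 1, 0, 1, 0, 2.
split; [exact: analogy_neq | split; first exact: analogy_neq].
by case=> -[le_ae_cf _] _; apply: not_lesssim_loop le_ae_cf.
Qed.
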